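(* Let $\mathcal{H}$ be a complex Hilbert space and let $T\in\mathcal{B}(\mathcal{H})$ be a concave operator such that $\Delta_T$ has rank one. Then $T$ is a $\Delta_T$-regular completely hyperexpansive operator and its Cauchy dual $T'=T(T^*T)^{-1}$ is a subnormal contraction.
   Context: $\Delta_T=T^*T-I$. $T$ is concave if $T^{*2}T^2-2T^*T+I\le0$ (then $T$ is left invertible). $T$ is $\Delta_T$-regular if $\Delta_TT=\Delta_T^{1/2}T\Delta_T^{1/2}$; completely hyperexpansive if $\sum_{j=0}^n(-1)^j\binom{n}{j}T^{*j}T^j\le0$ for all $n\ge1$. Subnormal means being the restriction of a normal operator to an invariant subspace. *)

From mathcomp Require Import all_boot all_order all_algebra.
From mathcomp Require Import reals complex.
Set Implicit Arguments. Unset Strict Implicit. Unset Printing Implicit Defensive.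
Import Order.TTheory GRing.Theory Num.Theory.
Local Open Scope ring_scope.

Definition ipnorm (R : realType) (V : lmodType R[i]) (ip : V -> V -> R[i]) (x : V) : R :=
  Num.sqrt (complex.Re (ip x x)).

Record hilbertSpace (R : realType) := HilbertSpace {
  hcarrier :> lmodType R[i];
  hip : hcarrier -> hcarrier -> R[i];
  hip_linl : forall (a : R[i]) (x y z : hcarrier), hip (a *: x + y) z = a * hip x z + hip y z;
  hip_sym : forall x y : hcarrier, hip y x = (hip x y)^*;
  hip_ge0 : forall x : hcarrier, 0 <= hip x x;
  hip_eq0 : forall x : hcarrier, hip x x = 0 -> x = 0;
  hcomplete : forall u : nat -> hcarrier,
    (forall e : R, 0 < e -> exists N : nat, forall m n : nat, (N <= m)%N -> (N <= n)%N ->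
        ipnorm hip (u m - u n) < e) ->
    exists l : hcarrier, forall e : R, 0 < e -> exists N : nat, forall n : nat, (N <= n)%N ->
        ipnorm hip (u n - l) < e
}.

Section Ops.
Variable R : realType.

Definition hnorm (H : hilbertSpace R) (x : H) : R := ipnorm (@hip R H) x.

Definition linear_op (H K : hilbertSpace R) (T : H -> K) : Prop :=
  forall (a : R[i]) (x y : H), T (a *: x + y) = a *: T x + T y.

Definition bounded_op (H K : hilbertSpace R) (T : H -> K) : Prop :=
  exists M : R, forall x : H, hnorm (T x) <= M * hnorm x.

Definition bop (H K : hilbertSpace R) (T : H -> K) : Prop := linear_op T /\ bounded_op T.

Definition is_adjoint (H : hilbertSpace R) (T Ts : H -> H) : Prop :=
  forall x y : H, hip (T x) y = hip x (Ts y).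

(* A <= 0 and A >= 0 in the operator order (complex order on R[i]: real and <= 0) *)
Definition op_le0 (H : hilbertSpace R) (A : H -> H) : Prop := forall x : H, hip (A x) x <= 0.
Definition op_ge0 (H : hilbertSpace R) (A : H -> H) : Prop := forall x : H, 0 <= hip (A x) x.

Definition DeltaT (H : hilbertSpace R) (T Ts : H -> H) : H -> H := fun x => Ts (T x) - x.

Definition concave (H : hilbertSpace R) (T Ts : H -> H) : Prop :=
  op_le0 (fun x => Ts (Ts (T (T x))) - 2 *: Ts (T x) + x).

Definition rank_one (H : hilbertSpace R) (A : H -> H) : Prop :=
  exists e : H, e <> 0 /\ forall y : H, (exists x, A x = y) <-> (exists c : R[i], y = c *: e).

Definition completely_hyperexpansive (H : hilbertSpace R) (T Ts : H -> H) : Prop :=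
  forall n : nat, (1 <= n)%N ->
    op_le0 (fun x => \sum_(j < n.+1) (((-1) ^+ j * ('C(n, j))%:R) *: iter j Ts (iter j T x))).

(* Delta_T-regular: Delta_T has a positive square root Delta_T^{1/2}, and
   Delta_T T = Delta_T^{1/2} T Delta_T^{1/2} (for the positive square root,
   which is unique). *)
Definition DeltaT_regular (H : hilbertSpace R) (T Ts : H -> H) : Prop :=
  (exists S : H -> H, bop S /\ op_ge0 S /\ forall x, S (S x) = DeltaT T Ts x) /\
  (forall S : H -> H, bop S -> op_ge0 S -> (forall x, S (S x) = DeltaT T Ts x) ->
     forall x, DeltaT T Ts (T x) = S (T (S x))).

Definition contraction (H : hilbertSpace R) (T : H -> H) : Prop :=
  forall x : H, hnorm (T x) <= hnorm x.

(* subnormal: T is the restriction of a normal operator N on a Hilbert space K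
   to an invariant subspace, i.e. there is an isometric embedding J : H -> K
   with N J = J T. *)
Definition subnormal (H : hilbertSpace R) (T : H -> H) : Prop :=
  exists (K : hilbertSpace R) (J : H -> K) (N Ns : K -> K),
    linear_op J /\ (forall x y : H, hip (J x) (J y) = hip x y) /\
    bop N /\ is_adjoint N Ns /\ (forall z : K, N (Ns z) = Ns (N z)) /\
    (forall x : H, N (J x) = J (T x)).

End Ops.

From mathcomp Require Import all_boot all_order all_algebra.
From mathcomp Require Import reals complex.
From mathcomp Require Import ring lra.
Import Order.TTheory GRing.Theory Num.Theory.
Local Open Scope ring_scope.

(* Since Delta_T = T^*T - I is self-adjoint of rank one, T^*T = I + kap P for a
   unit vector e, P = <., e> e and a real kap <> 0. The concavity form evaluates
   to kap (|<T x, e>|^2 - |<x, e>|^2) <= 0, which forces kap > 0 and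
   T^* e = lam e with |lam| <= 1. Everything then lives in the commutative algebra
   spanned by I and P:
   - a positive square root of Delta_T = kap P is necessarily sqrt(kap) P, hence
     Delta_T-regularity;
   - |T^(j+1) x|^2 - |T^j x|^2 = kap |lam|^(2j) |<x, e>|^2, so the n-th binomial
     difference of j |-> |T^j x|^2 is -kap |<x, e>|^2 (1 - |lam|^2)^(n-1) <= 0;
   - (T^*T)^-1 = I - k P with k = kap / (1 + kap), so the Cauchy dual T' satisfies
     T'^*T' = I - k P and <T' x, e> = a <x, e> with |a|^2 + k < 1.
   Such a T' is subnormal: for a suitable Y = I - (1 - q) P, the operator
   C = Y T' Y^-1 is an isometry, and x |-> (sqrt(1 - q^2) <x, e> e, Y x, 0)
   embeds H isometrically into H + H + H, intertwining T' with the normal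
   operator a (+) U, where U = [[C, I - C C^*], [0, -C^*]] is the unitary
   dilation of C. *)

Section InnerProduct.
Context {R : realType} {H : hilbertSpace R}.
Local Notation ip := (@hip R H).

Lemma hipDl (x y z : H) : ip (x + y) z = ip x z + ip y z.
Proof. by rewrite -{1}[x]scale1r hip_linl mul1r. Qed.

Lemma hip0l (z : H) : ip 0 z = 0.
Proof. by apply: (addrI (ip 0 z)); rewrite -hipDl !addr0. Qed.

Lemma hipZl (a : R[i]) (x z : H) : ip (a *: x) z = a * ip x z.
Proof. by rewrite -[a *: x]addr0 hip_linl hip0l addr0. Qed.

Lemma hipNl (x z : H) : ip (- x) z = - ip x z.
Proof. by rewrite -scaleN1r hipZl mulN1r. Qed.

Lemma hipBl (x y z : H) : ip (x - y) z = ip x z - ip y z.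
Proof. by rewrite hipDl hipNl. Qed.

Lemma hip0r (z : H) : ip z 0 = 0.
Proof. by rewrite hip_sym hip0l conjC0. Qed.

Lemma hipDr (x y z : H) : ip z (x + y) = ip z x + ip z y.
Proof. by rewrite hip_sym hipDl rmorphD /= -!hip_sym. Qed.

Lemma hipZr (a : R[i]) (x z : H) : ip z (a *: x) = a^* * ip z x.
Proof. by rewrite hip_sym hipZl rmorphM /= -hip_sym. Qed.

Lemma hipNr (x z : H) : ip z (- x) = - ip z x.
Proof. by rewrite hip_sym hipNl rmorphN /= -hip_sym. Qed.

Lemma hipBr (x y z : H) : ip z (x - y) = ip z x - ip z y.
Proof. by rewrite hipDr hipNr. Qed.

Lemma hip_suml (I : Type) (r : seq I) (P : pred I) (F : I -> H) (z : H) :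
  ip (\sum_(i <- r | P i) F i) z = \sum_(i <- r | P i) ip (F i) z.
Proof. by elim/big_rec2: _ => [|i y1 y2 _ <-]; rewrite ?hip0l ?hipDl. Qed.

Lemma hip_injr (u v : H) : (forall z, ip z u = ip z v) -> u = v.
Proof.
move=> huv; apply/eqP; rewrite -subr_eq0; apply/eqP/hip_eq0.
by rewrite hipBr huv subrr.
Qed.

Lemma hip_injl (u v : H) : (forall z, ip u z = ip v z) -> u = v.
Proof.
move=> huv; apply/eqP; rewrite -subr_eq0; apply/eqP/hip_eq0.
by rewrite hipBl huv subrr.
Qed.

Lemma hip_conj_ge0 (x y : H) : 0 <= ip x y * ip y x.
Proof. by rewrite [ip y x]hip_sym mul_conjC_ge0. Qed.

Lemma bessel (e x : H) : ip e e = 1 -> ip x e * ip e x <= ip x x.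
Proof.
move=> he; rewrite -subr_ge0.
have := hip_ge0 (x - ip x e *: e).
by rewrite !(hipBl, hipBr, hipZl, hipZr) he -hip_sym; congr (_ <= _); ring.
Qed.

Lemma Re_hip_ge0 (x : H) : 0 <= complex.Re (ip x x).
Proof. by have := hip_ge0 x; rewrite lecE => /andP[]. Qed.

Lemma hnorm_le (x y : H) : ip y y <= ip x x -> hnorm y <= hnorm x.
Proof. by rewrite lecE => /andP[_ ?]; rewrite ler_wsqrtr. Qed.

End InnerProduct.

Ltac hip_expand := rewrite ?(hipDl, hipDr, hipZl, hipZr, hipNl, hipNr, hipBl, hipBr, hip0l, hip0r).

Section Operators.
Context {R : realType} {H K : hilbertSpace R}.

Section Linear.
Context {f : H -> K} (f_lin : linear_op f).

Lemma linear_opD x y : f (x + y) = f x + f y.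
Proof. by have := f_lin 1 x y; rewrite !scale1r. Qed.

Lemma linear_op0 : f 0 = 0.
Proof. by apply: (addrI (f 0)); rewrite -linear_opD !addr0. Qed.

Lemma linear_opZ a x : f (a *: x) = a *: f x.
Proof. by have := f_lin a x 0; rewrite !addr0 linear_op0 addr0. Qed.

Lemma linear_opN x : f (- x) = - f x.
Proof. by rewrite -scaleN1r linear_opZ scaleN1r. Qed.

Lemma linear_opB x y : f (x - y) = f x - f y.
Proof. by rewrite linear_opD linear_opN. Qed.

End Linear.

Lemma linear_op_adjl {f : H -> K} {g : K -> H} :
  (forall x z, hip (f x) z = hip x (g z)) -> linear_op f.
Proof. by move=> fg a x y; apply: hip_injl => z; rewrite fg; hip_expand; rewrite !fg. Qed.

Lemma linear_op_adjr {f : H -> K} {g : K -> H} :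
  (forall x z, hip (f x) z = hip x (g z)) -> linear_op g.
Proof. by move=> fg a x y; apply: hip_injr => z; hip_expand; rewrite -!fg; hip_expand. Qed.

Lemma hnorm_leM (x : H) (y : K) (m : R[i]) : 0 <= m -> hip y y <= m * hip x x ->
  hnorm y <= Num.sqrt (complex.Re m) * hnorm x.
Proof.
case: m => a b /[dup] /ger0_Im /= -> m_ge0; rewrite lecE => /andP[_ le_yx].
have a_ge0 : 0 <= a by move: m_ge0; rewrite lecE => /andP[].
rewrite -sqrtrM // ler_wsqrtr //.
by case: (hip x x) le_yx => ? ? /=; rewrite mul0r subr0.
Qed.

Lemma contraction_hip (f : H -> H) :
  (forall x, hip (f x) (f x) <= hip x x) -> contraction f.
Proof. by move=> hf x; apply: hnorm_le. Qed.

Lemma contraction_bounded (f : H -> H) : contraction f -> bounded_op f.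
Proof. by move=> hf; exists 1 => x; rewrite mul1r. Qed.

Lemma is_adjointC {T Ts : H -> H} : is_adjoint T Ts -> is_adjoint Ts T.
Proof. by move=> T_adj x y; rewrite hip_sym -T_adj -hip_sym. Qed.

Lemma isometry_adjointK {C Cs : H -> H} :
  is_adjoint C Cs -> (forall x y, hip (C x) (C y) = hip x y) -> forall x, Cs (C x) = x.
Proof. by move=> C_adj C_iso x; apply: hip_injr => z; rewrite -C_adj C_iso. Qed.

End Operators.

Section ProductSpace.
Context {R : realType} (H1 H2 : hilbertSpace R).

Definition prod_lmod : lmodType R[i] := (hcarrier H1 * hcarrier H2)%type.

Definition prod_ip (x y : prod_lmod) : R[i] := hip x.1 y.1 + hip x.2 y.2.

Lemma prod_ip_linl a (x y z : prod_lmod) :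
  prod_ip (a *: x + y) z = a * prod_ip x z + prod_ip y z.
Proof. by rewrite /prod_ip /= !hip_linl; ring. Qed.

Lemma prod_ip_sym (x y : prod_lmod) : prod_ip y x = (prod_ip x y)^*.
Proof. by rewrite /prod_ip rmorphD /= -!hip_sym. Qed.

Lemma prod_ip_ge0 (x : prod_lmod) : 0 <= prod_ip x x.
Proof. by rewrite addr_ge0 ?hip_ge0. Qed.

Lemma prod_ip_eq0 (x : prod_lmod) : prod_ip x x = 0 -> x = 0.
Proof.
move=> /eqP; rewrite paddr_eq0 ?hip_ge0 // => /andP[/eqP x1 /eqP x2].
by case: x x1 x2 => x1 x2 /= /hip_eq0 -> /hip_eq0 ->.
Qed.

Lemma Re_prod_ip (x : prod_lmod) :
  complex.Re (prod_ip x x) = complex.Re (hip x.1 x.1) + complex.Re (hip x.2 x.2).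
Proof. by rewrite /prod_ip; case: (hip x.1 x.1); case: (hip x.2 x.2). Qed.

Lemma prod_norm_ge1 (x : prod_lmod) : hnorm x.1 <= ipnorm prod_ip x.
Proof. by rewrite ler_wsqrtr // Re_prod_ip lerDl Re_hip_ge0. Qed.

Lemma prod_norm_ge2 (x : prod_lmod) : hnorm x.2 <= ipnorm prod_ip x.
Proof. by rewrite ler_wsqrtr // Re_prod_ip lerDr Re_hip_ge0. Qed.

Lemma prod_norm_le (x : prod_lmod) : ipnorm prod_ip x <= hnorm x.1 + hnorm x.2.
Proof.
rewrite /hnorm /ipnorm Re_prod_ip.
set a := complex.Re (hip x.1 x.1); set b := complex.Re (hip x.2 x.2).
have a_ge0 : 0 <= a by apply: Re_hip_ge0.
have b_ge0 : 0 <= b by apply: Re_hip_ge0.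
rewrite -(ger0_norm (addr_ge0 (sqrtr_ge0 a) (sqrtr_ge0 b))) -sqrtr_sqr ler_wsqrtr //.
rewrite sqrrD !sqr_sqrtr //.
have : 0 <= Num.sqrt a * Num.sqrt b *+ 2 by rewrite mulrn_wge0 // mulr_ge0 // sqrtr_ge0.
lra.
Qed.

Lemma prod_complete (u : nat -> prod_lmod) :
  (forall e : R, 0 < e -> exists N : nat, forall m n : nat, (N <= m)%N -> (N <= n)%N ->
      ipnorm prod_ip (u m - u n) < e) ->
  exists l : prod_lmod, forall e : R, 0 < e -> exists N : nat, forall n : nat, (N <= n)%N ->
      ipnorm prod_ip (u n - l) < e.
Proof.
move=> u_cauchy.
have [l1 u1_lim] : exists l1 : H1, forall e : R, 0 < e -> exists N : nat,
    forall n : nat, (N <= n)%N -> hnorm ((u n).1 - l1) < e.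
  apply: hcomplete => e /u_cauchy[N uN]; exists N => m n Nm Nn.
  exact: le_lt_trans (prod_norm_ge1 _) (uN m n Nm Nn).
have [l2 u2_lim] : exists l2 : H2, forall e : R, 0 < e -> exists N : nat,
    forall n : nat, (N <= n)%N -> hnorm ((u n).2 - l2) < e.
  apply: hcomplete => e /u_cauchy[N uN]; exists N => m n Nm Nn.
  exact: le_lt_trans (prod_norm_ge2 _) (uN m n Nm Nn).
exists (l1, l2) => e e_gt0.
have e2_gt0 : 0 < e / 2 by rewrite divr_gt0.
have [N1 uN1] := u1_lim _ e2_gt0; have [N2 uN2] := u2_lim _ e2_gt0.
exists (maxn N1 N2) => n Nn; apply: le_lt_trans (prod_norm_le _) _.
have := uN1 n (leq_trans (leq_maxl _ _) Nn); have := uN2 n (leq_trans (leq_maxr _ _) Nn).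
rewrite /=; lra.
Qed.

Definition prodH : hilbertSpace R :=
  HilbertSpace prod_ip_linl prod_ip_sym prod_ip_ge0 prod_ip_eq0 prod_complete.

Lemma hip_prodH (x y : prodH) : hip x y = hip x.1 y.1 + hip x.2 y.2.
Proof. by []. Qed.

End ProductSpace.

Definition normal_contraction {R : realType} {H : hilbertSpace R} (N Ns : H -> H) : Prop :=
  [/\ is_adjoint N Ns, forall z, N (Ns z) = Ns (N z) & forall z, hip (N z) (N z) <= hip z z].

Section NormalContractions.
Context {R : realType}.

Lemma normal_contraction_bop {H : hilbertSpace R} {N Ns : H -> H} :
  normal_contraction N Ns -> bop N.
Proof.
case=> N_adj _ N_contr; split; first exact: linear_op_adjl N_adj.
exact/contraction_bounded/contraction_hip.
Qed.

Lemma scale_normal_contraction {H : hilbertSpace R} (a : R[i]) : a * a^* <= 1 ->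
  normal_contraction (fun z : H => a *: z) (fun z => a^* *: z).
Proof.
move=> a_le1; split=> [z y|z|z].
- by rewrite hipZl hipZr conjCK.
- by rewrite !scalerA mulrC.
- by rewrite hipZl hipZr mulrA; exact: ler_piMl (hip_ge0 z) a_le1.
Qed.

Definition prod_op {H1 H2 : hilbertSpace R} (A : H1 -> H1) (B : H2 -> H2)
  (z : prodH H1 H2) : prodH H1 H2 := (A z.1, B z.2).

Lemma prod_op_normal_contraction {H1 H2 : hilbertSpace R} {A As : H1 -> H1} {B Bs : H2 -> H2} :
  normal_contraction A As -> normal_contraction B Bs ->
  normal_contraction (prod_op A B) (prod_op As Bs).
Proof.
case=> A_adj A_comm A_contr [B_adj B_comm B_contr]; split=> [z y|z|z].
- by rewrite !hip_prodH /= A_adj B_adj.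
- by rewrite /prod_op /= A_comm B_comm.
- by rewrite !hip_prodH /=; apply: lerD.
Qed.

Section IsometryDilation.
Context {H : hilbertSpace R} (C Cs : H -> H).
Hypotheses (C_adj : is_adjoint C Cs) (C_isometry : forall x, Cs (C x) = x).

Definition isometry_dilation (z : prodH H H) : prodH H H :=
  (C z.1 + (z.2 - C (Cs z.2)), - Cs z.2).

Definition isometry_dilation_adj (z : prodH H H) : prodH H H :=
  (Cs z.1, (z.1 - C (Cs z.1)) - C z.2).

Let C_lin : linear_op C := linear_op_adjl C_adj.
Let Cs_lin : linear_op Cs := linear_op_adjr C_adj.

Lemma isometry_dilationK z : isometry_dilation_adj (isometry_dilation z) = z.
Proof.
case: z => u w; rewrite /isometry_dilation_adj /=.
rewrite (linear_opD Cs_lin) (linear_opB Cs_lin) !C_isometry subrr addr0.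
by congr (_, _); apply: hip_injl => y; rewrite (linear_opN C_lin); hip_expand; ring.
Qed.

Lemma isometry_dilation_adjK z : isometry_dilation (isometry_dilation_adj z) = z.
Proof.
case: z => u w; rewrite /isometry_dilation /=.
rewrite !(linear_opB Cs_lin) !C_isometry.
by congr (_, _); apply: hip_injl => y; rewrite ?(linear_opB C_lin); hip_expand; ring.
Qed.

Lemma isometry_dilation_normal_contraction :
  normal_contraction isometry_dilation isometry_dilation_adj.
Proof.
have dil_adj : is_adjoint isometry_dilation isometry_dilation_adj.
  case=> u w [u' w']; rewrite !hip_prodH /=; hip_expand.
  have Cs_adj := is_adjointC C_adj.
  by rewrite (C_adj u) (C_adj (Cs w)) (Cs_adj w w') -(Cs_adj w (Cs u')); ring.
split=> // [z|z]; first by rewrite isometry_dilationK isometry_dilation_adjK.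
by rewrite dil_adj isometry_dilationK.
Qed.

End IsometryDilation.

Lemma subnormal_isometric_model {H : hilbertSpace R}
    (S Y u C Cs : H -> H) (a : R[i]) :
  linear_op Y -> linear_op u -> is_adjoint C Cs -> (forall x, Cs (C x) = x) ->
  (forall x, C (Y x) = Y (S x)) -> (forall x, u (S x) = a *: u x) -> a * a^* <= 1 ->
  (forall x y, hip (u x) (u y) + hip (Y x) (Y y) = hip x y) ->
  subnormal S.
Proof.
move=> Y_lin u_lin C_adj C_iso CY uS a_le1 J_iso.
pose N := prod_op (fun z : H => a *: z) (isometry_dilation C Cs).
pose Ns := prod_op (fun z : H => a^* *: z) (isometry_dilation_adj C Cs).
have N_normal : normal_contraction N Ns := prod_op_normal_contraction
  (scale_normal_contraction a a_le1) (isometry_dilation_normal_contraction _ _ C_adj C_iso).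
have [N_adj N_comm _] := N_normal.
exists (prodH H (prodH H H)), (fun x => (u x, (Y x, 0))), N, Ns.
split; [|split; [|split; [|split; [|split]]]].
- move=> c x y; rewrite u_lin Y_lin; congr (_, (_, _)).
  by rewrite -[RHS]/(c *: 0 + 0 : H) scaler0 addr0.
- by move=> x y; rewrite !hip_prodH /= hip0l addr0 J_iso.
- exact: normal_contraction_bop N_normal.
- exact: N_adj.
- exact: N_comm.
- move=> x; rewrite /N /prod_op /isometry_dilation /= uS CY.
  rewrite (linear_op0 (linear_op_adjr C_adj)) (linear_op0 (linear_op_adjl C_adj)).
  by rewrite subr0 addr0 oppr0.
Qed.

End NormalContractions.

Section RankOne.
Context {R : realType} {H : hilbertSpace R} (e : H).
Hypothesis e_unit : hip e e = 1.
Local Notation ip := (@hip R H).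

Definition rank1_op (c : R[i]) (x : H) : H := (c * ip x e) *: e.

Definition rank1_update (c : R[i]) (x : H) : H := x + rank1_op c x.

Lemma hip_rank1_opl c x y : ip (rank1_op c x) y = c * ip x e * ip e y.
Proof. by rewrite hipZl. Qed.

Lemma rank1_op_adj c : is_adjoint (rank1_op c) (rank1_op c^*).
Proof. by move=> x y; rewrite hip_rank1_opl hipZr rmorphM /= conjCK -hip_sym; ring. Qed.

Lemma rank1_opM c d x : rank1_op c (rank1_op d x) = rank1_op (c * d) x.
Proof. by rewrite /rank1_op hipZl e_unit mulr1 mulrA. Qed.

Lemma rank1_op_ge0 c : 0 <= c -> op_ge0 (rank1_op c).
Proof. by move=> c_ge0 x; rewrite hip_rank1_opl -mulrA mulr_ge0 ?hip_conj_ge0. Qed.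

Lemma rank1_op_bounded c : bounded_op (rank1_op c).
Proof.
exists (Num.sqrt (complex.Re (c * c^*))) => x; apply: hnorm_leM; first exact: mul_conjC_ge0.
rewrite hip_rank1_opl hipZr e_unit mulr1 rmorphM /= -hip_sym.
have -> : c * ip x e * (c^* * ip e x) = c * c^* * (ip x e * ip e x) by ring.
by rewrite ler_wpM2l ?mul_conjC_ge0 ?bessel.
Qed.

Lemma hip_rank1_updatel c x y : ip (rank1_update c x) y = ip x y + c * ip x e * ip e y.
Proof. by rewrite hipDl hip_rank1_opl. Qed.

Lemma hip_rank1_update_e c x : ip (rank1_update c x) e = (1 + c) * ip x e.
Proof. by rewrite hip_rank1_updatel e_unit; ring. Qed.

Lemma rank1_update_adj c : is_adjoint (rank1_update c) (rank1_update c^*).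
Proof. by move=> x y; rewrite hipDl hipDr rank1_op_adj. Qed.

Lemma rank1_updateM c d x :
  rank1_update c (rank1_update d x) = rank1_update (c + d + c * d) x.
Proof.
by apply: hip_injl => y; rewrite !hip_rank1_updatel e_unit; ring.
Qed.

Lemma rank1_update0 x : rank1_update 0 x = x.
Proof. by rewrite /rank1_update /rank1_op !mul0r scale0r addr0. Qed.

Lemma rank1_updateK c : 1 + c != 0 -> cancel (rank1_update c) (rank1_update (- (c / (1 + c)))).
Proof. by move=> c1 x; rewrite rank1_updateM -[RHS]rank1_update0; congr rank1_update; field. Qed.

Lemma rank1_updateVK c : 1 + c != 0 -> cancel (rank1_update (- (c / (1 + c)))) (rank1_update c).
Proof. by move=> c1 x; rewrite rank1_updateM -[RHS]rank1_update0; congr rank1_update; field. Qed.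

Lemma hip_rank1_update c x y :
  ip (rank1_update c x) (rank1_update c y) = ip x y + (c + c^* + c * c^*) * ip x e * ip e y.
Proof.
by rewrite /rank1_update /rank1_op; hip_expand; rewrite rmorphM /= -hip_sym e_unit; ring.
Qed.

Lemma rank1_update_contraction c : c + c^* + c * c^* <= 0 -> contraction (rank1_update c).
Proof.
move=> c_le0; apply: contraction_hip => x; rewrite hip_rank1_update -mulrA gerDl.
by rewrite mulr_le0_ge0 ?hip_conj_ge0.
Qed.

End RankOne.

Section PositiveRankOne.
Context {R : realType} {H : hilbertSpace R}.
Local Notation ip := (@hip R H).

Lemma op_ge0_sqr_eq0 {S : H -> H} : linear_op S -> op_ge0 S ->
  forall x, S (S x) = 0 -> S x = 0.
Proof.
move=> S_lin S_ge0 x SSx; set z := S x in SSx *; apply: hip_eq0.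
apply/eqP/negPn/negP => zz_neq0.
(* testing positivity on x - t z with t^* = (ip z x + 1) / ip z z gives -1 *)
pose t := ((ip z x + 1) / ip z z)^*.
have := S_ge0 (x - t *: z).
rewrite (linear_opB S_lin) (linear_opZ S_lin) SSx scaler0 subr0 hipBr hipZr conjCK.
by rewrite divfK // opprD addNKr ler0N1.
Qed.

Lemma unit_vector_span {e0 : H} : e0 <> 0 ->
  exists e r, [/\ ip e e = 1, r != 0 & e0 = r *: e].
Proof.
move=> e0_neq0.
have n0_gt0 : 0 < ip e0 e0.
  by rewrite lt_def hip_ge0 andbT; apply/eqP => /hip_eq0.
set r := sqrtC (ip e0 e0).
have r_gt0 : 0 < r by rewrite sqrtC_gt0.
exists (r^-1 *: e0), r; split.
- rewrite hipZl hipZr geC0_conj ?invr_ge0 ?ltW // -[ip e0 e0](sqrtCK (ip e0 e0)) -/r.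
  by rewrite mulrA -expr2 -exprMn mulVf ?gt_eqF // expr1n.
- by rewrite gt_eqF.
- by rewrite scalerA divff ?gt_eqF // scale1r.
Qed.

Lemma selfadjoint_rank_one {D : H -> H} : is_adjoint D D -> rank_one D ->
  exists e kap, [/\ ip e e = 1, kap^* = kap, kap != 0 & forall x, D x = rank1_op e kap x].
Proof.
move=> D_adj [e0 [e0_neq0 D_range]].
have [e [r [e_unit r_neq0 e0E]]] := unit_vector_span e0_neq0.
have De_span x : D x = ip (D x) e *: e.
  have [/(_ (ex_intro _ x erefl)) [c ->] _] := D_range (D x).
  by rewrite e0E scalerA hipZl e_unit mulr1.
set kap := ip (D e) e.
have kap_real : kap^* = kap by rewrite /kap -hip_sym (D_adj e e).
have DE x : D x = rank1_op e kap x.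
  by rewrite De_span (D_adj x) (De_span e) hipZr kap_real /rank1_op mulrC.
exists e, kap; split=> //.
have e_span : e = r^-1 *: e0 by rewrite e0E scalerA mulVf // scale1r.
have [_ /(_ (ex_intro _ r^-1 e_span)) [x Dx]] := D_range e.
apply/eqP => kap0; have := congr1 (ip^~ e) Dx.
by rewrite /= DE /rank1_op kap0 mul0r scale0r hip0l e_unit => /eqP; rewrite eq_sym oner_eq0.
Qed.

Lemma op_ge0_sqrt_rank1 {S : H -> H} {e : H} {kap : R[i]} :
  ip e e = 1 -> kap != 0 -> linear_op S -> op_ge0 S ->
  (forall x, S (S x) = rank1_op e kap x) ->
  exists nu, nu * nu = kap /\ forall x, S x = rank1_op e nu x.
Proof.
move=> e_unit kap_neq0 S_lin S_ge0 SS.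
have SeE : S e = ip (S e) e *: e.
  apply: (scalerI kap_neq0); rewrite scalerA.
  have := SS (S e); rewrite [in X in S X = _]SS /rank1_op e_unit mulr1.
  by rewrite (linear_opZ S_lin) => ->.
set nu := ip (S e) e in SeE *; exists nu; split.
  have := SS e; rewrite SeE (linear_opZ S_lin) SeE scalerA /rank1_op e_unit mulr1.
  by move/(congr1 (ip^~ e)); rewrite /= !hipZl e_unit !mulr1.
move=> x; have : S (S (x - ip x e *: e)) = 0.
  by rewrite SS /rank1_op hipBl hipZl e_unit mulr1 subrr mulr0 scale0r.
move/(op_ge0_sqr_eq0 S_lin S_ge0)/eqP.
by rewrite (linear_opB S_lin) (linear_opZ S_lin) SeE scalerA subr_eq0 mulrC => /eqP.
Qed.

End PositiveRankOne.

Section RankOneDefect.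
Context {R : realType} {H : hilbertSpace R} {S Ss : H -> H} {e : H} {k a : R[i]}.
Hypotheses (S_adj : is_adjoint S Ss) (e_unit : hip e e = 1).
Hypotheses (SsS : forall x, Ss (S x) = rank1_update e (- k) x)
  (Se : forall x, hip (S x) e = a * hip x e).
Hypotheses (k_ge0 : 0 <= k) (ak_lt1 : a * a^* + k < 1).
Local Notation ip := (@hip R H).

(* [b] solves [k + b |a|^2 = b], which makes [Y S] and [Y] have the same Gram form *)
Let b := k / (1 - a * a^*).
Let q := sqrtC (1 - b).
Let beta := sqrtC b.
Let Y := rank1_update e (q - 1).
Let Yi := rank1_update e (q^-1 - 1).

Let k_real : k^* = k. Proof. exact: geC0_conj. Qed.

Let aa_lt1 : 0 < 1 - a * a^*.
Proof. by rewrite subr_gt0; apply: le_lt_trans ak_lt1; rewrite lerDl. Qed.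

Let b_ge0 : 0 <= b. Proof. by rewrite divr_ge0 // ltW. Qed.

Let b_lt1 : b < 1.
Proof. by rewrite ltr_pdivrMr // mul1r ltrBrDl. Qed.

Let b_eq : k + b * (a * a^*) = b.
Proof.
have bk : b * (1 - a * a^*) = k by rewrite divfK // lt0r_neq0.
by rewrite -[in LHS]bk; ring.
Qed.

Let q_gt0 : 0 < q. Proof. by rewrite sqrtC_gt0 subr_gt0. Qed.
Let q_real : q^* = q. Proof. exact/geC0_conj/ltW. Qed.
Let qq : q * q = 1 - b. Proof. by rewrite -expr2 sqrtCK. Qed.
Let beta_real : beta^* = beta. Proof. by rewrite geC0_conj // sqrtC_ge0. Qed.
Let beta2 : beta * beta = b. Proof. by rewrite -expr2 sqrtCK. Qed.

Let Y_adj : is_adjoint Y Y.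
Proof. by have := rank1_update_adj e (q - 1); rewrite rmorphB rmorph1 /= q_real. Qed.

Let Yi_adj : is_adjoint Yi Yi.
Proof.
by have := rank1_update_adj e (q^-1 - 1); rewrite rmorphB rmorph1 fmorphV /= q_real.
Qed.

Let YK x : Y (Yi x) = x.
Proof.
rewrite /Y /Yi rank1_updateM // -[RHS](rank1_update0 e); congr rank1_update.
by field; rewrite lt0r_neq0.
Qed.

Let YiK x : Yi (Y x) = x.
Proof.
rewrite /Y /Yi rank1_updateM // -[RHS](rank1_update0 e); congr rank1_update.
by field; rewrite lt0r_neq0.
Qed.

Let hip_Y x y : ip (Y x) (Y y) = ip x y - b * ip x e * ip e y.
Proof.
rewrite /Y hip_rank1_update // rmorphB rmorph1 /= q_real.
have -> : b = 1 - q * q by rewrite qq; ring.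
by ring.
Qed.

Let hip_S x y : ip (S x) (S y) = ip x y - k * ip x e * ip e y.
Proof.
rewrite S_adj SsS /rank1_update /rank1_op; hip_expand.
by rewrite rmorphM rmorphN /= k_real -hip_sym; ring.
Qed.

Let hip_YS x y : ip (Y (S x)) (Y (S y)) = ip (Y x) (Y y).
Proof.
rewrite !hip_Y hip_S Se [ip e (S y)]hip_sym Se rmorphM /= -hip_sym -[in RHS]b_eq.
by ring.
Qed.

Theorem subnormal_rank1_defect : subnormal S.
Proof.
pose C x := Y (S (Yi x)); pose Cs x := Yi (Ss (Y x)).
have C_adj : is_adjoint C Cs by move=> x y; rewrite /C /Cs Y_adj S_adj Yi_adj.
have C_isom : forall x y, ip (C x) (C y) = ip x y by move=> x y; rewrite /C hip_YS !YK.
have C_iso := isometry_adjointK C_adj C_isom.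
apply: (subnormal_isometric_model S Y (rank1_op e beta) C Cs a _ _ C_adj C_iso).
- exact: linear_op_adjl Y_adj.
- exact: linear_op_adjl (rank1_op_adj e beta).
- by move=> x; rewrite /C YiK.
- by move=> x; rewrite /rank1_op Se scalerA mulrCA.
- by apply: le_trans (ltW ak_lt1); rewrite lerDl.
- move=> x y; rewrite hip_rank1_opl hipZr e_unit mulr1 rmorphM /= beta_real -hip_sym.
  by rewrite hip_Y -beta2; ring.
Qed.

End RankOneDefect.

Section BinomialDifference.
Context {F : comPzRingType}.

Definition bindiff (n : nat) (f : nat -> F) : F :=
  \sum_(j < n.+1) (-1) ^+ j * 'C(n, j)%:R * f j.

Lemma bindiffS n f : bindiff n.+1 f = bindiff n f - bindiff n (fun j => f j.+1).
Proof.
rewrite /bindiff big_ord_recl [in X in _ = X - _]big_ord_recl /= !bin0 !expr0 !mul1r.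
have -> : \sum_(i < n.+1) (-1) ^+ bump 0 i * 'C(n.+1, bump 0 i)%:R * f (bump 0 i)
    = \sum_(i < n.+1) - ((-1) ^+ i * 'C(n, i)%:R * f i.+1)
      + \sum_(i < n.+1) (-1) ^+ i.+1 * 'C(n, i.+1)%:R * f i.+1.
  rewrite -big_split; apply: eq_bigr => i _.
  by rewrite /bump /= add1n binS natrD exprS; ring.
rewrite sumrN [X in _ + (_ + X) = _]big_ord_recr /= bin_small // mulr0n mulr0 mul0r addr0.
have -> : \sum_(i < n) (-1) ^+ bump 0 i * 'C(n, bump 0 i)%:R * f (bump 0 i)
    = \sum_(i < n) (-1) ^+ i.+1 * 'C(n, i.+1)%:R * f i.+1.
  by apply: eq_bigr => i _; rewrite /bump add1n.
ring.
Qed.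

Lemma bindiff_exp n (s : F) : bindiff n (fun j => s ^+ j) = (1 - s) ^+ n.
Proof.
rewrite exprBn /bindiff; apply: eq_bigr => j _.
by rewrite expr1n mulr1 -mulr_natr; ring.
Qed.

Lemma bindiff_geometric_increments n (c s : F) f :
  (forall j, f j.+1 = f j + c * s ^+ j) -> bindiff n.+1 f = - (c * (1 - s) ^+ n).
Proof.
move=> f_incr; rewrite bindiffS -bindiff_exp -mulNr /bindiff mulr_sumr -sumrB.
by apply: eq_bigr => j _; rewrite f_incr; ring.
Qed.

End BinomialDifference.

Lemma DeltaT_adjoint {R : realType} {H : hilbertSpace R} {T Ts : H -> H} :
  is_adjoint T Ts -> is_adjoint (DeltaT T Ts) (DeltaT T Ts).
Proof.
by move=> T_adj x y; rewrite /DeltaT hipBl hipBr (is_adjointC T_adj) T_adj.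
Qed.

Section ConcaveRankOne.
Context {R : realType} {H : hilbertSpace R} {T Ts : H -> H} {e : H} {kap : R[i]}.
Hypotheses (T_adj : is_adjoint T Ts) (e_unit : hip e e = 1).
Hypothesis TsT : forall x, Ts (T x) = rank1_update e kap x.
Local Notation ip := (@hip R H).

Lemma hip_T x y : ip (T x) (T y) = ip x y + kap * ip x e * ip e y.
Proof. by rewrite -(is_adjointC T_adj) TsT hip_rank1_updatel. Qed.

Hypotheses (kap_real : kap^* = kap) (kap_neq0 : kap != 0) (T_concave : concave T Ts).

Lemma concave_rank1_defect x : kap * (ip (T x) e * ip e (T x) - ip x e * ip e x) <= 0.
Proof.
have := T_concave x; rewrite /= hipDl hipBl hipZl !(is_adjointC T_adj) !hip_T.
by congr (_ <= _); ring.
Qed.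

Lemma concave_rank1_gt0 : 0 < kap.
Proof.
have kap_r : kap \is Num.real by apply/CrealP.
rewrite lt_def kap_neq0 real_leNgt ?real0 //; apply/negP => kap_lt0.
have := concave_rank1_defect e; rewrite e_unit mul1r nmulr_rle0 // subr_ge0 => le1.
have := le_trans le1 (bessel e (T e) e_unit); rewrite hip_T e_unit !mulr1 lerDl.
by rewrite real_leNgt ?real0 ?kap_lt0.
Qed.

Lemma concave_rank1_eigen : Ts e = ip (Ts e) e *: e.
Proof.
set lam := ip (Ts e) e; set x := Ts e - lam *: e.
have xe0 : ip x e = 0 by rewrite hipBl hipZl e_unit mulr1 subrr.
have Txe0 : ip (T x) e = 0.
  have := concave_rank1_defect x; rewrite xe0 mul0r subr0 pmulr_rle0 ?concave_rank1_gt0 //.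
  rewrite [ip e _]hip_sym => le0; apply/eqP.
  by rewrite -mul_conjC_eq0 eq_le le0 mul_conjC_ge0.
apply/eqP; rewrite -subr_eq0 -/x; apply/eqP/hip_eq0.
by rewrite {2}/x hipBr -T_adj Txe0 hipZr xe0 mulr0 subr0.
Qed.

Lemma concave_rank1_eigen_le1 : ip (Ts e) e * (ip (Ts e) e)^* <= 1.
Proof.
have := concave_rank1_defect e; rewrite e_unit mul1r pmulr_rle0 ?concave_rank1_gt0 //.
by rewrite subr_le0 T_adj [ip e (T e)]hip_sym T_adj -!hip_sym mulrC.
Qed.

End ConcaveRankOne.

Section RankOneExpansion.
Context {R : realType} {H : hilbertSpace R} {T Ts : H -> H} {e : H} {kap lam : R[i]}.
Hypotheses (T_adj : is_adjoint T Ts) (e_unit : hip e e = 1).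
Hypotheses (TsT : forall x, Ts (T x) = rank1_update e kap x) (kap_gt0 : 0 < kap).
Hypotheses (Tse : Ts e = lam *: e) (lam_le1 : lam * lam^* <= 1).
Local Notation ip := (@hip R H).

Let kap_real : kap^* = kap. Proof. exact/geC0_conj/ltW. Qed.

Lemma hip_T_e x : ip (T x) e = lam^* * ip x e.
Proof. by rewrite T_adj Tse hipZr. Qed.

Lemma DeltaT_rank1 x : DeltaT T Ts x = rank1_op e kap x.
Proof. by rewrite /DeltaT TsT /rank1_update addrC addKr. Qed.

Lemma rank1_DeltaT_regular : DeltaT_regular T Ts.
Proof.
split.
  exists (rank1_op e (sqrtC kap)); split; [split|split].
  - exact: linear_op_adjl (rank1_op_adj e _).
  - exact: rank1_op_bounded.
  - by apply: rank1_op_ge0; rewrite sqrtC_ge0 ltW.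
  - by move=> x; rewrite rank1_opM // -expr2 sqrtCK DeltaT_rank1.
move=> S [S_lin _] S_ge0 SS x.
have [nu [nu2 SE]] : exists nu, nu * nu = kap /\ forall x, S x = rank1_op e nu x.
  apply: (op_ge0_sqrt_rank1 e_unit _ S_lin S_ge0); first by rewrite lt0r_neq0.
  by move=> y; rewrite SS DeltaT_rank1.
rewrite DeltaT_rank1 !SE /rank1_op (linear_opZ (linear_op_adjl T_adj)) !hipZl !hip_T_e e_unit.
by congr (_ *: _); rewrite -nu2; ring.
Qed.

Lemma hip_iter_adj j y z : ip (iter j Ts y) z = ip y (iter j T z).
Proof. by elim: j z => [//|j IH] z; rewrite iterS (is_adjointC T_adj) IH iterSr. Qed.

Lemma hip_iterT_e j x : ip (iter j T x) e = lam^* ^+ j * ip x e.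
Proof.
elim: j => [|j IH]; first by rewrite expr0 mul1r.
by rewrite iterS hip_T_e IH exprS mulrA.
Qed.

Lemma rank1_completely_hyperexpansive : completely_hyperexpansive T Ts.
Proof.
move=> [//|n] _ x; rewrite hip_suml.
have -> : \sum_(j < n.+2) ip (((-1) ^+ j * 'C(n.+1, j)%:R) *: iter j Ts (iter j T x)) x
    = bindiff n.+1 (fun j => ip (iter j T x) (iter j T x)).
  by apply: eq_bigr => j _; rewrite hipZl hip_iter_adj.
rewrite (@bindiff_geometric_increments _ n (kap * (ip x e * ip e x)) (lam * lam^*)).
  rewrite oppr_le0 mulr_ge0 ?exprn_ge0 ?subr_ge0 //.
  by rewrite mulr_ge0 ?hip_conj_ge0 ?ltW.
move=> j; rewrite iterS (hip_T T_adj TsT) hip_iterT_e [ip e _]hip_sym hip_iterT_e.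
by rewrite rmorphM rmorphXn /= conjCK -hip_sym exprMn; ring.
Qed.

Let k := kap / (1 + kap).
Local Notation B := (rank1_update e (- k)).

Let kap1_neq0 : 1 + kap != 0. Proof. by rewrite lt0r_neq0 // addr_gt0. Qed.
Let k_gt0 : 0 < k. Proof. by rewrite divr_gt0 // addr_gt0. Qed.
Let k_lt1 : k < 1. Proof. by rewrite ltr_pdivrMr ?addr_gt0 // mul1r ltrDr. Qed.
Let k_real : k^* = k. Proof. exact/geC0_conj/ltW. Qed.

Lemma TsT_inverse_l x : B (Ts (T x)) = x.
Proof. by rewrite TsT rank1_updateK. Qed.

Lemma TsT_inverse_r x : Ts (T (B x)) = x.
Proof. by rewrite TsT rank1_updateVK. Qed.

Let B_adj : is_adjoint B B.
Proof. by have := rank1_update_adj e (- k); rewrite rmorphN /= k_real. Qed.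

Let B_contraction : contraction B.
Proof.
apply: rank1_update_contraction => //; rewrite rmorphN /= k_real.
have -> : - k + - k + - k * - k = k * (k - 2) by ring.
by rewrite pmulr_rle0 // subr_le0 (le_trans (ltW k_lt1)) // ler1n.
Qed.

Lemma TsT_inverse_bop : bop B.
Proof. by split; [exact: linear_op_adjl B_adj | exact: contraction_bounded B_contraction]. Qed.

Lemma cauchy_dual_contraction : contraction (fun x => T (B x)).
Proof.
apply: contraction_hip => x; rewrite -(is_adjointC T_adj) TsT_inverse_r -B_adj.
by rewrite hip_rank1_updatel gerDl -mulrA mulNr oppr_le0 mulr_ge0 ?hip_conj_ge0 ?ltW.
Qed.

Lemma cauchy_dual_subnormal : subnormal (fun x => T (B x)).
Proof.
set a := lam^* * (1 - k).
have k1_ge0 : 0 <= 1 - k by rewrite subr_ge0 ltW.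
have ak_lt1 : a * a^* + k < 1.
  have -> : a * a^* = lam * lam^* * ((1 - k) * (1 - k)).
    by rewrite /a rmorphM rmorphB rmorph1 /= conjCK k_real; ring.
  rewrite -ltrBrDr; apply: (@le_lt_trans _ _ ((1 - k) * (1 - k))).
    by apply: ler_piMl; rewrite ?mulr_ge0.
  by rewrite -[X in _ < X]mul1r ltr_pM2r ?subr_gt0 // ltrBlDr ltrDl.
apply: (subnormal_rank1_defect (k := k) (a := a) _ e_unit _ _ (ltW k_gt0) ak_lt1).
- by move=> x y; rewrite T_adj B_adj.
- by move=> x; rewrite /= TsT_inverse_r.
- by move=> x; rewrite hip_T_e hip_rank1_update_e // mulrA.
Qed.

End RankOneExpansion.

Theorem corollary3p6 (R : realType) (H : hilbertSpace R) (T Ts : H -> H) :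
  bop T -> is_adjoint T Ts -> concave T Ts -> rank_one (DeltaT T Ts) ->
  DeltaT_regular T Ts /\ completely_hyperexpansive T Ts /\
  exists B : H -> H, bop B /\ (forall x, B (Ts (T x)) = x) /\ (forall x, Ts (T (B x)) = x) /\
    contraction (fun x => T (B x)) /\ subnormal (fun x => T (B x)).
Proof.
move=> _ T_adj T_concave Delta_rank1.
have [e [kap [e_unit kap_real kap_neq0 DeltaE]]] :=
  selfadjoint_rank_one (DeltaT_adjoint T_adj) Delta_rank1.
have TsT x : Ts (T x) = rank1_update e kap x.
  by rewrite /rank1_update -DeltaE /DeltaT addrC subrK.
have kap_gt0 := concave_rank1_gt0 T_adj e_unit TsT kap_real kap_neq0 T_concave.
have Tse := concave_rank1_eigen T_adj e_unit TsT kap_real kap_neq0 T_concave.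
have lam_le1 := concave_rank1_eigen_le1 T_adj e_unit TsT kap_real kap_neq0 T_concave.
split; first exact: rank1_DeltaT_regular T_adj e_unit TsT kap_gt0 Tse.
split; first exact: rank1_completely_hyperexpansive T_adj TsT kap_gt0 Tse lam_le1.
exists (rank1_update e (- (kap / (1 + kap)))).
split; first exact: TsT_inverse_bop e_unit kap_gt0.
split; first exact: TsT_inverse_l e_unit TsT kap_gt0.
split; first exact: TsT_inverse_r e_unit TsT kap_gt0.
split; first exact: cauchy_dual_contraction T_adj e_unit TsT kap_gt0.
exact: cauchy_dual_subnormal T_adj e_unit TsT kap_gt0 Tse lam_le1.
Qed.
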